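(* Suppose $G$ acts transitively on $S$. Then for every $\sigma$-finite jointly invariant measure $M$ on $S\times S$ and every $B\in\mathcal S$, $$\int\tilde\Delta(s,t)\mathbf 1_B(s)\,M(d(s,t))=\int\mathbf 1_B(t)\,M(d(s,t)),$$ where $\tilde\Delta(s,t)=\Delta(g^{-1})$ for any $g\in G$ with $gs=t$.
   Context: $G$ is a locally compact second countable Hausdorff group with left Haar measure $\lambda$ and modular function $\Delta$ ($\int f(gh)\lambda(dg)=\Delta(h^{-1})\int f\,d\lambda$). $(S,\mathcal S)$ is a Borel space on which $G$ acts measurably and properly (with $\mu_s$ the image of $\lambda$ under $g\mapsto gs$, there is a measurable partition $B_1,B_2,\dots$ of $S$ with $\mu_s(B_n)<\infty$ for all $s,n$); under properness $\Delta(g^{-1})$ does not depend on the choice of $g$ with $gs=t$. Transitive means $Gs=S$ for some (all) $s$. $M$ jointly invariant means $M(\{(gs,gt):(s,t)\in A\})=M(A)$ for all $g$ and measurable $A$. *)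

From HB Require Import structures.
From mathcomp Require Import all_boot all_order all_algebra.
From mathcomp Require Import all_classical all_reals all_analysis measurable_realfun.
Set Implicit Arguments. Unset Strict Implicit. Unset Printing Implicit Defensive.
Import Order.TTheory GRing.Theory Num.Theory.
Local Open Scope classical_set_scope.
Local Open Scope ring_scope.

Notation borel T := (g_sigma_algebraType (@open T)).

Definition lcsc_group (G : ptopologicalType) (mul : G -> G -> G) (one : G)
  (inv : G -> G) : Prop :=
  [/\ (forall x y z, mul x (mul y z) = mul (mul x y) z),
      (forall x, mul one x = x /\ mul x one = x),
      (forall x, mul (inv x) x = one /\ mul x (inv x) = one),
      continuous (fun p : G * G => mul p.1 p.2) /\ continuous inv &
      [/\ hausdorff_space G, locally_compact [set: G] & @second_countable G]].

(* lam is a left Haar measure on the Borel sets of G: a nonzero, left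
   invariant Borel measure that is finite on compact sets (for an lcsc group
   such a measure is automatically Radon). *)
Definition left_haar (R : realType) (G : ptopologicalType) (mul : G -> G -> G)
  (lam : {measure set (borel G) -> \bar R}) : Prop :=
  [/\ (forall (g : G) (A : set (borel G)), measurable A ->
         lam [set mul g x | x in A] = lam A),
      (forall K : set G, compact K -> (lam K < +oo)%E) &
      (lam [set: borel G] != 0)%E].

Definition modular_function (R : realType) (G : ptopologicalType)
  (mul : G -> G -> G) (inv : G -> G)
  (lam : {measure set (borel G) -> \bar R}) (Delta : G -> R) : Prop :=
  forall (f : borel G -> \bar R), (forall x, (0 <= f x)%E) ->
    measurable_fun [set: borel G] f ->
    forall h : G,
      (\int[lam]_g f (mul g h) = (Delta (inv h))%:E * \int[lam]_g f g)%E.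

Definition borel_space (R : realType) d (S : measurableType d) : Prop :=
  exists f : S -> R,
    [/\ measurable_fun [set: S] f, injective f,
        measurable (f @` [set: S]) /\ f @` [set: S] `<=` `[0, 1]%classic &
        (forall A : set S, measurable A -> measurable (f @` A))].

Definition measurable_action (G : ptopologicalType) (mul : G -> G -> G)
  (one : G) d (S : measurableType d) (act : G -> S -> S) : Prop :=
  [/\ measurable_fun [set: (borel G * S)%type]
        (fun p : borel G * S => act p.1 p.2),
      (forall s, act one s = s) &
      (forall g h s, act (mul g h) s = act g (act h s))].

Definition orbit_measure (R : realType) (G : ptopologicalType)
  (lam : {measure set (borel G) -> \bar R}) d (S : measurableType d)
  (act : G -> S -> S) (s : S) (B : set S) : \bar R :=
  lam [set g : borel G | B (act g s)].

Definition proper_action (R : realType) (G : ptopologicalType)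
  (lam : {measure set (borel G) -> \bar R}) d (S : measurableType d)
  (act : G -> S -> S) : Prop :=
  exists B : nat -> set S,
    [/\ (forall n, measurable (B n)), trivIset [set: nat] B,
        \bigcup_n B n = [set: S] &
        (forall s n, (orbit_measure lam act s (B n) < +oo)%E)].

Definition transitive_action (G : ptopologicalType) d (S : measurableType d)
  (act : G -> S -> S) : Prop :=
  exists s : S, forall t : S, exists g : G, act g s = t.

Definition jointly_invariant (R : realType) (G : ptopologicalType) d
  (S : measurableType d) (act : G -> S -> S)
  (M : {measure set (S * S)%type -> \bar R}) : Prop :=
  forall (g : G) (A : set (S * S)%type), measurable A ->
    M [set (act g p.1, act g p.2) | p in A] = M A.

Definition Delta_tilde (R : realType) (G : ptopologicalType) (one : G)
  (inv : G -> G) (Delta : G -> R) d (S : measurableType d)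
  (act : G -> S -> S) (s t : S) : R :=
  Delta (inv (xget one [set g : G | act g s = t])).

From HB Require Import structures.
From mathcomp Require Import all_boot all_order all_algebra.
From mathcomp Require Import all_classical all_reals all_analysis measurable_realfun.
Import Order.TTheory GRing.Theory Num.Theory.
Local Open Scope classical_set_scope.
Local Open Scope ring_scope.
Set Implicit Arguments.
Unset Strict Implicit.
Unset Printing Implicit Defensive.

(* Properness yields a set C with 0 < lam {g | g s0 \in C} < +oo.  For q := 1_C
   the weight w u := \int q (g u) dg ([orbit_weight]) satisfies
   w (k u) = Delta (k^-1) * w u, hence Delta_tilde (s, t) = w t / w s.
   Inserting 1 = \int q (g s) / w s dg, Tonelli and the joint invariance of M give
     \int Phi dM = \int q s \int Phi (g^-1 s, g^-1 t) / w (g^-1 s) dg M(d(s,t)).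
   For both sides of the identity the inner integral becomes
   q s * (w t / w s) * \int 1_B (g^-1 u) / w (g^-1 u) dg, with u = s resp. u = t,
   and by left invariance of lam and transitivity this integral does not depend
   on u. *)

Lemma continuous_borel_measurable (T U : ptopologicalType) (f : T -> U) :
  continuous f -> measurable_fun [set: borel T] (f : borel T -> borel U).
Proof.
move=> /continuousP cf; apply: measurability => // _ [V oV <-].
by apply: sub_sigma_algebra; rewrite setTI; exact: cf.
Qed.

Lemma preimage_can2 (T U : Type) (f : T -> U) (g : U -> T) (A : set U) :
  cancel f g -> cancel g f -> f @^-1` A = g @` A.
Proof.
move=> fK gK; apply/seteqP; split => [x Afx|_ [y Ay <-]].
  by exists (f x); rewrite ?fK.
by rewrite /= gK.
Qed.

Lemma mulr_divKr (F : fieldType) (k x y z : F) :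
  x != 0 -> k * (x / y) * (z / x) = k / y * z.
Proof. by move=> x0; rewrite mulrACA [x / y * _]mulrAC divff // mul1r mulrAC. Qed.

Section measure_preserving.
Context d d' (T : measurableType d) (U : measurableType d') (R : realType).
Variables (mu : {measure set T -> \bar R}) (nu : {measure set U -> \bar R}).
Variable f : T -> U.
Hypothesis mf : measurable_fun [set: T] f.
Hypothesis f_preserving : forall A, measurable A -> mu (f @^-1` A) = nu A.

Lemma ge0_integral_measure_preserving (psi : U -> \bar R) :
  measurable_fun [set: U] psi -> (forall y, 0 <= psi y)%E ->
  (\int[nu]_y psi y = \int[mu]_x psi (f x))%E.
Proof.
move=> mpsi psi0.
have := ge0_integral_pushforward mf mu measurableT mpsi (fun y _ => psi0 y).
rewrite preimage_setT => <-.
by apply: eq_measure_integral => A mA _; rewrite -f_preserving.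
Qed.

End measure_preserving.

Section sigma_finite_fubini.
Context d1 d2 (T1 : measurableType d1) (T2 : measurableType d2) (R : realType).
Variables (m1 : {measure set T1 -> \bar R}) (m2 : {measure set T2 -> \bar R}).
Hypotheses (m1_sf : sigma_finite [set: T1] m1) (m2_sf : sigma_finite [set: T2] m2).

(* Copies of [m1] and [m2] carrying the [sigma_finite_measure] structure that the
   library's Fubini-Tonelli theorems expect. *)
Definition m1_sfin := (m1 : set T1 -> \bar R).
HB.instance Definition _ := Measure.on m1_sfin.
HB.instance Definition _ := Measure_isSigmaFinite.Build _ _ _ m1_sfin m1_sf.
Definition m2_sfin := (m2 : set T2 -> \bar R).
HB.instance Definition _ := Measure.on m2_sfin.
HB.instance Definition _ := Measure_isSigmaFinite.Build _ _ _ m2_sfin m2_sf.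

Lemma sigma_finite_fubini_tonelli (f : T1 * T2 -> \bar R) :
  measurable_fun [set: T1 * T2] f -> (forall x, 0 <= f x)%E ->
  (\int[m1]_x \int[m2]_y f (x, y) = \int[m2]_y \int[m1]_x f (x, y))%E.
Proof. by move=> mf f0; exact: (@fubini_tonelli _ _ _ _ _ m1_sfin m2_sfin f mf f0). Qed.

Lemma sigma_finite_measurable_fun_integral (f : T1 * T2 -> \bar R) :
  measurable_fun [set: T1 * T2] f -> (forall x, 0 <= f x)%E ->
  measurable_fun [set: T1] (fun x => \int[m2]_y f (x, y))%E.
Proof.
by move=> mf f0; exact: (@measurable_fun_fubini_tonelli_F _ _ _ _ _ m2_sfin f mf f0).
Qed.

End sigma_finite_fubini.

Lemma measurable_funV_gt0 d (T : measurableType d) (R : realType) (f : T -> R) :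
  measurable_fun [set: T] f -> (forall x, 0 < f x) ->
  measurable_fun [set: T] (fun x => (f x)^-1).
Proof.
move=> mf f_gt0.
have -> : (fun x => (f x)^-1) = expR \o (fun x => - ln (f x)).
  by apply/funext => x /=; rewrite expRN lnK// posrE.
apply: measurableT_comp; first exact: measurable_expR.
by apply/measurable_funN/measurableT_comp; [exact: measurable_ln|exact: mf].
Qed.

Lemma continuous_curry_at (T U V : topologicalType) (f : T -> U -> V) (x : T) :
  continuous (fun p : T * U => f p.1 p.2) -> continuous (f x).
Proof.
move=> cf y; apply: (continuous_comp (f := fun y => (x, y))) (cf (x, y)).
exact: cvg_pair (cvg_cst _) cvg_id.
Qed.

Section group_action.
Variables (G : ptopologicalType) (mul : G -> G -> G) (one : G) (inv : G -> G).
Hypothesis mulA : forall x y z, mul x (mul y z) = mul (mul x y) z.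
Hypothesis mul1 : forall x, mul one x = x /\ mul x one = x.
Hypothesis mulV : forall x, mul (inv x) x = one /\ mul x (inv x) = one.

Lemma mul_invK h : cancel (mul h) (mul (inv h)).
Proof. by move=> x; rewrite mulA (mulV h).1 (mul1 x).1. Qed.

Lemma mul_invKV h : cancel (mul (inv h)) (mul h).
Proof. by move=> x; rewrite mulA (mulV h).2 (mul1 x).1. Qed.

Variables (d : measure_display) (S : measurableType d) (act : G -> S -> S).
Hypothesis act1 : forall s, act one s = s.
Hypothesis actM : forall g h s, act (mul g h) s = act g (act h s).

Lemma act_invK g : cancel (act g) (act (inv g)).
Proof. by move=> s; rewrite -actM (mulV g).1 act1. Qed.

Lemma act_invKV g : cancel (act (inv g)) (act g).
Proof. by move=> s; rewrite -actM (mulV g).2 act1. Qed.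

Lemma act_invM h g u : act (inv (mul h g)) (act h u) = act (inv g) u.
Proof. by rewrite -{1}(act_invKV g u) -[act h (act g _)]actM act_invK. Qed.

Definition act2 g (p : S * S) : S * S := (act g p.1, act g p.2).

Lemma act2_invK g : cancel (act2 g) (act2 (inv g)).
Proof. by case=> s t; rewrite /act2 /= !act_invK. Qed.

Lemma act2_invKV g : cancel (act2 (inv g)) (act2 g).
Proof. by case=> s t; rewrite /act2 /= !act_invKV. Qed.

Hypothesis mact :
  measurable_fun [set: borel G * S] (fun p : borel G * S => act p.1 p.2).

Lemma measurable_act_comp d' (T : measurableType d') (g : T -> borel G) (u : T -> S) :
  measurable_fun [set: T] g -> measurable_fun [set: T] u ->
  measurable_fun [set: T] (fun x => act (g x) (u x)).
Proof.
move=> mg mu.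
exact: (measurableT_comp (f := fun p : borel G * S => act p.1 p.2) mact
  (measurable_fun_pair mg mu)).
Qed.

Lemma measurable_act2 g : measurable_fun [set: S * S] (act2 g).
Proof.
by apply: measurable_fun_pair; apply: measurable_act_comp (measurable_cst _) _;
  [exact: measurable_fst|exact: measurable_snd].
Qed.

Section jointly_invariant_measure.
Variables (R : realType) (M : {measure set (S * S)%type -> \bar R}).
Hypothesis M_inv : jointly_invariant act M.

Lemma jointly_invariant_integral g (psi : S * S -> \bar R) :
  measurable_fun [set: S * S] psi -> (forall p, 0 <= psi p)%E ->
  (\int[M]_p psi p = \int[M]_p psi (act2 g p))%E.
Proof.
apply: (ge0_integral_measure_preserving (mu := M) (measurable_act2 g)) => A mA.
by rewrite (preimage_can2 _ (act2_invK g) (act2_invKV g)); exact: M_inv.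
Qed.

End jointly_invariant_measure.

Section left_haar_measure.
Variables (R : realType) (lam : {measure set (borel G) -> \bar R}).
Hypothesis lam_left : forall (g : G) (A : set (borel G)), measurable A ->
  lam [set mul g x | x in A] = lam A.
Hypothesis mleft : forall h, measurable_fun [set: borel G] (mul h : borel G -> borel G).
Hypothesis minv : measurable_fun [set: borel G] (inv : borel G -> borel G).

Lemma left_haar_integral h (psi : borel G -> \bar R) :
  measurable_fun [set: borel G] psi -> (forall g, 0 <= psi g)%E ->
  (\int[lam]_g psi g = \int[lam]_g psi (mul h g))%E.
Proof.
apply: (ge0_integral_measure_preserving (mu := lam) (mleft h)) => A mA.
by rewrite (preimage_can2 _ (mul_invK h) (mul_invKV h)); exact: lam_left.
Qed.

Lemma integral_act_inv_act (f : S -> \bar R) h u :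
  measurable_fun [set: S] f -> (forall s, 0 <= f s)%E ->
  (\int[lam]_g f (act (inv g) (act h u)) = \int[lam]_g f (act (inv g) u))%E.
Proof.
move=> mf f0; rewrite (left_haar_integral h) //.
- by apply: eq_integral => g _; rewrite act_invM.
- exact: measurableT_comp mf (measurable_act_comp minv (measurable_cst _)).
Qed.

Variable s0 : S.
Hypothesis act_trans : forall t, exists g, act g s0 = t.

Lemma integral_act_inv_const (f : S -> \bar R) s t :
  measurable_fun [set: S] f -> (forall s, 0 <= f s)%E ->
  (\int[lam]_g f (act (inv g) s) = \int[lam]_g f (act (inv g) t))%E.
Proof.
move=> mf f0; have [a <-] := act_trans s; have [b <-] := act_trans t.
by rewrite !integral_act_inv_act.
Qed.

Section orbit_weight.
Variable Delta : G -> R.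
Hypothesis lam_modular : modular_function mul inv lam Delta.
Hypothesis lam_sf : sigma_finite [set: borel G] lam.
Variable q : S -> R.
Hypothesis q_ge0 : forall s, 0 <= q s.
Hypothesis mq : measurable_fun [set: S] q.

Definition orbit_integral (u : S) : \bar R := (\int[lam]_g (q (act g u))%:E)%E.

Hypothesis orbit_integral_s0_gt0 : (0 < orbit_integral s0)%E.
Hypothesis orbit_integral_s0_fin : (orbit_integral s0 < +oo)%E.

Lemma measurable_orbit_integral : measurable_fun [set: S] orbit_integral.
Proof.
apply: (sigma_finite_measurable_fun_integral lam_sf
  (f := fun x : S * borel G => (q (act x.2 x.1))%:E)) => [|x].
  apply/measurable_EFinP/(measurableT_comp mq).
  exact: measurable_act_comp measurable_snd measurable_fst.
by rewrite lee_fin.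
Qed.

Lemma orbit_integral_act k u :
  orbit_integral (act k u) = ((Delta (inv k))%:E * orbit_integral u)%E.
Proof.
rewrite /orbit_integral -lam_modular.
- by apply: eq_integral => g _; rewrite actM.
- by move=> g; rewrite lee_fin.
- by apply/measurable_EFinP; exact: measurableT_comp mq (measurable_fun_pair1 u mact).
Qed.

Lemma orbit_integral_fin_num u : orbit_integral u \is a fin_num.
Proof.
have [b <-] := act_trans u.
rewrite orbit_integral_act fin_numM// ge0_fin_numE// ltW//.
Qed.

Definition orbit_weight (u : S) : R := fine (orbit_integral u).

Lemma orbit_weightE u : orbit_integral u = (orbit_weight u)%:E.
Proof. by rewrite fineK// orbit_integral_fin_num. Qed.

Lemma orbit_weight_act k u : orbit_weight (act k u) = Delta (inv k) * orbit_weight u.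
Proof. by have := orbit_integral_act k u; rewrite !orbit_weightE -EFinM => -[]. Qed.

(* [orbit_integral s0] is a nonzero multiple of [orbit_integral u]. *)
Lemma orbit_weight_gt0 u : 0 < orbit_weight u.
Proof.
have [b <-] := act_trans u.
have : orbit_integral s0 != 0%E by rewrite gt_eqF.
rewrite -{1}(act_invK b s0) orbit_integral_act !orbit_weightE -EFinM eqe.
rewrite mulf_eq0 negb_or => /andP[_ w_neq0].
rewrite lt_neqAle eq_sym w_neq0 -lee_fin -orbit_weightE.
by apply: integral_ge0 => g _; rewrite lee_fin.
Qed.

Lemma orbit_weight_neq0 u : orbit_weight u != 0.
Proof. by rewrite gt_eqF// orbit_weight_gt0. Qed.

Lemma orbit_weight_ratio_act k s t :
  orbit_weight (act k t) / orbit_weight (act k s) = orbit_weight t / orbit_weight s.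
Proof.
have Delta_neq0 : Delta (inv k) != 0.
  apply: contra_neq (orbit_weight_neq0 (act k s)) => D0.
  by rewrite orbit_weight_act D0 mul0r.
by rewrite !orbit_weight_act invfM mulrACA divff// mul1r.
Qed.

Lemma measurable_orbit_weight : measurable_fun [set: S] orbit_weight.
Proof.
by apply: measurableT_comp measurable_orbit_integral; exact: fine_measurable.
Qed.

Lemma measurable_orbit_weightV : measurable_fun [set: S] (fun u => (orbit_weight u)^-1).
Proof. exact: measurable_funV_gt0 measurable_orbit_weight orbit_weight_gt0. Qed.

Lemma Delta_tildeE s t :
  Delta_tilde one inv Delta act s t = orbit_weight t / orbit_weight s.
Proof.
rewrite /Delta_tilde; set g := xget one _.
have <- : act g s = t.
  apply: (@xgetPex _ one [set g | act g s = t]).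
  have [a <-] := act_trans s; have [b <-] := act_trans t.
  by exists (mul b (inv a)); rewrite /= actM act_invK.
by rewrite orbit_weight_act mulfK// orbit_weight_neq0.
Qed.

(* Invariance of the weight ratio turns the integrands into [c * f (g^-1 u)] with
   [u = s] and [u = t] respectively. *)
Lemma inner_integral_transport (B : set S) s t : measurable B ->
  (\int[lam]_g (q s / orbit_weight (act (inv g) s) *
     (orbit_weight (act (inv g) t) / orbit_weight (act (inv g) s) *
      \1_B (act (inv g) s)))%:E
   = \int[lam]_g (q s / orbit_weight (act (inv g) s) * \1_B (act (inv g) t))%:E)%E.
Proof.
move=> mB.
pose f u := \1_B u / orbit_weight u.
have fE_ge0 u : (0 <= (f u)%:E)%E.
  by rewrite lee_fin mulr_ge0// invr_ge0 ltW// orbit_weight_gt0.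
have mfE : measurable_fun [set: S] (fun u => (f u)%:E).
  apply/measurable_EFinP.
  exact: measurable_funM (measurable_indic mB) measurable_orbit_weightV.
have mfg u : measurable_fun [set: borel G] (fun g => (f (act (inv g) u))%:E).
  exact: measurableT_comp mfE (measurable_act_comp minv (measurable_cst _)).
pose c := q s * (orbit_weight t / orbit_weight s).
have c_ge0 : 0 <= c by rewrite /c !mulr_ge0// ?invr_ge0 ltW// orbit_weight_gt0.
transitivity (\int[lam]_g (c * f (act (inv g) s))%:E)%E.
  apply: eq_integral => g _; congr (_%:E).
  by rewrite orbit_weight_ratio_act /c /f mulrACA [_^-1 * _]mulrC.
transitivity (\int[lam]_g (c * f (act (inv g) t))%:E)%E; last first.
  apply: eq_integral => g _; congr (_%:E).
  by rewrite /c /f -(orbit_weight_ratio_act (inv g) s t) mulr_divKr ?orbit_weight_neq0.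
under eq_integral do rewrite EFinM.
under [in RHS]eq_integral do rewrite EFinM.
rewrite [LHS](ge0_integralZl_EFin _ measurableT (fun g _ => fE_ge0 _) (mfg s) c_ge0).
rewrite [RHS](ge0_integralZl_EFin _ measurableT (fun g _ => fE_ge0 _) (mfg t) c_ge0).
by congr (_ * _)%E; exact: integral_act_inv_const mfE fE_ge0.
Qed.

Section transport.
Variable M : {measure set (S * S)%type -> \bar R}.
Hypothesis M_sf : sigma_finite [set: S * S] M.
Hypothesis M_inv : jointly_invariant act M.

Lemma integral_shear (F : (S * S) * borel G -> \bar R) :
  measurable_fun [set: (S * S) * borel G] F -> (forall x, 0 <= F x)%E ->
  (\int[M]_p \int[lam]_g F (p, g) = \int[M]_p \int[lam]_g F (act2 (inv g) p, g))%E.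
Proof.
move=> mF F0.
have mF_shear : measurable_fun [set: (S * S) * borel G]
    (fun x => F (act2 (inv x.2) x.1, x.2)).
  apply: measurableT_comp mF _; apply: measurable_fun_pair => //.
  have minv2 := measurableT_comp minv (measurable_snd (T1 := (S * S)%type)).
  by apply: measurable_fun_pair; apply: measurable_act_comp minv2 _;
    [exact: measurableT_comp measurable_fst measurable_fst
    |exact: measurableT_comp measurable_snd measurable_fst].
rewrite (sigma_finite_fubini_tonelli M_sf lam_sf mF F0).
rewrite (sigma_finite_fubini_tonelli M_sf lam_sf mF_shear (fun x => F0 _)).
apply: eq_integral => g _.
apply: (jointly_invariant_integral M_inv (inv g)) => //.
exact: measurable_fun_pair1 g mF.
Qed.

(* Insert [1 = \int q(g p.1) / w(p.1) dg] and move [g] onto the pair. *)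
Lemma integral_unfold (Phi : S * S -> R) :
  measurable_fun [set: S * S] Phi -> (forall p, 0 <= Phi p) ->
  (\int[M]_p (Phi p)%:E = \int[M]_p \int[lam]_g
    (q p.1 / orbit_weight (act (inv g) p.1) * Phi (act2 (inv g) p))%:E)%E.
Proof.
move=> mPhi Phi0.
have w_ge0 u : 0 <= (orbit_weight u)^-1 by rewrite invr_ge0 ltW// orbit_weight_gt0.
transitivity (\int[M]_p \int[lam]_g (q (act g p.1) / orbit_weight p.1 * Phi p)%:E)%E.
  apply: eq_integral => p _.
  under eq_integral do rewrite -mulrA EFinM.
  rewrite ge0_integralZr //=.
  - rewrite -/(orbit_integral p.1) orbit_weightE -EFinM mulrA divff ?mul1r//.
    exact: orbit_weight_neq0.
  - by apply/measurable_EFinP; exact: measurableT_comp mq (measurable_fun_pair1 _ mact).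
  - by move=> g _; rewrite lee_fin.
  - by rewrite lee_fin mulr_ge0.
pose F x := (q (act x.2 x.1.1) / orbit_weight x.1.1 * Phi x.1)%:E.
have F_ge0 x : (0 <= F x)%E by rewrite lee_fin !mulr_ge0.
have mF : measurable_fun [set: (S * S) * borel G] F.
  apply/measurable_EFinP/measurable_funM; last first.
    exact: measurableT_comp mPhi measurable_fst.
  apply: measurable_funM.
    apply: measurableT_comp mq _; apply: measurable_act_comp measurable_snd _.
    exact: measurableT_comp measurable_fst measurable_fst.
  exact: measurableT_comp measurable_orbit_weightV
    (measurableT_comp measurable_fst measurable_fst).
rewrite (integral_shear mF F_ge0).
by apply: eq_integral => p _; apply: eq_integral => g _; rewrite /F /act2 /= act_invKV.
Qed.

Lemma Delta_tilde_transport (B : set S) : measurable B ->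
  (\int[M]_p ((Delta_tilde one inv Delta act p.1 p.2)%:E * (\1_B p.1)%:E)
   = \int[M]_p (\1_B p.2)%:E)%E.
Proof.
move=> mB.
have mindic1 : measurable_fun [set: S * S] (fun p => \1_B p.1 : R).
  exact: measurableT_comp (measurable_indic mB) measurable_fst.
have mindic2 : measurable_fun [set: S * S] (fun p => \1_B p.2 : R).
  exact: measurableT_comp (measurable_indic mB) measurable_snd.
have mratio : measurable_fun [set: S * S]
    (fun p => orbit_weight p.2 / orbit_weight p.1 * \1_B p.1).
  apply: measurable_funM; last exact: mindic1.
  apply: measurable_funM.
    exact: measurableT_comp measurable_orbit_weight measurable_snd.
  exact: measurableT_comp measurable_orbit_weightV measurable_fst.
under eq_integral do rewrite Delta_tildeE -EFinM.
rewrite [LHS](integral_unfold mratio) => [|p]; last first.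
  by rewrite !mulr_ge0// ?invr_ge0 ltW// orbit_weight_gt0.
rewrite [RHS](integral_unfold mindic2) //.
by apply: eq_integral => p _; exact: inner_integral_transport.
Qed.

End transport.
End orbit_weight.
End left_haar_measure.
End group_action.

Section proper_action.
Variables (R : realType) (G : ptopologicalType).
Variable lam : {measure set (borel G) -> \bar R}.
Variables (d : measure_display) (S : measurableType d) (act : G -> S -> S) (s0 : S).
Hypothesis mact :
  measurable_fun [set: borel G * S] (fun p : borel G * S => act p.1 p.2).

Lemma measurable_orbit_preimage (B : set S) :
  measurable B -> measurable [set g : borel G | B (act g s0)].
Proof.
by move=> mB; have := measurable_fun_pair1 s0 mact measurableT mB; rewrite setTI.
Qed.

Lemma orbit_measureE (B : set S) : measurable B ->
  (\int[lam]_g (\1_B (act g s0))%:E)%E = orbit_measure lam act s0 B.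
Proof.
move=> mB; rewrite /orbit_measure -[X in lam X]setIT -integral_indic //.
exact: measurable_orbit_preimage.
Qed.

Hypothesis act_proper : proper_action lam act.

Lemma proper_action_sigma_finite : sigma_finite [set: borel G] lam.
Proof.
have [B [mB _ cover_B B_fin]] := act_proper.
exists (fun n => [set g : borel G | B n (act g s0)]) => [|n].
  apply/seteqP; split => // g _.
  by have : [set: S] (act g s0) by []; rewrite -cover_B => -[n _ Bn]; exists n.
by split; [exact: measurable_orbit_preimage|exact: B_fin].
Qed.

(* A null family of sets covering G would make lam vanish. *)
Lemma proper_action_orbit_measure_gt0 : lam [set: borel G] != 0%E ->
  exists B, [/\ measurable B, (0 < orbit_measure lam act s0 B)%E
                & (orbit_measure lam act s0 B < +oo)%E].
Proof.
have [B [mB _ cover_B B_fin]] := act_proper.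
move=> lam_neq0; apply/not_existsP => B_null.
have B0 n : orbit_measure lam act s0 (B n) = 0%E.
  apply/eqP; rewrite eq_le measure_ge0 andbT leNgt; apply/negP => B_gt0.
  by apply: (B_null (B n)); split.
move/eqP : lam_neq0; apply; apply/eqP; rewrite eq_le measure_ge0 andbT.
rewrite -(@eseries0 _ (fun n => orbit_measure lam act s0 (B n)) 0%N xpredT) //.
apply: measure_sigma_subadditive => [n||g _] //; first exact: measurable_orbit_preimage.
by have : [set: S] (act g s0) by []; rewrite -cover_B => -[n _ Bn]; exists n.
Qed.

End proper_action.

Theorem corollary6p2 (R : realType) (G : ptopologicalType)
  (mul : G -> G -> G) (one : G) (inv : G -> G)
  (lam : {measure set (borel G) -> \bar R}) (Delta : G -> R)
  (d : measure_display) (S : measurableType d) (act : G -> S -> S) :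
  lcsc_group mul one inv ->
  left_haar mul lam ->
  modular_function mul inv lam Delta ->
  borel_space R S ->
  measurable_action mul one act ->
  proper_action lam act ->
  transitive_action act ->
  forall (M : {measure set (S * S)%type -> \bar R}),
    sigma_finite [set: (S * S)%type] M ->
    jointly_invariant act M ->
    forall B : set S, measurable B ->
      (\int[M]_p ((Delta_tilde one inv Delta act p.1 p.2)%:E * (\1_B p.1)%:E)
       = \int[M]_p (\1_B p.2)%:E)%E.
Proof.
move=> [mulA mul1 mulV [cmul cinv] _] [lam_left _ lam_neq0] lam_modular _
  [mact act1 actM] act_proper [s0 act_trans] M M_sf M_inv B mB.
have minv := continuous_borel_measurable cinv.
have mleft h := continuous_borel_measurable (continuous_curry_at (x := h) cmul).
have lam_sf := proper_action_sigma_finite s0 mact act_proper.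
have [C [mC C_gt0 C_fin]] :=
  proper_action_orbit_measure_gt0 s0 mact act_proper lam_neq0.
rewrite -orbit_measureE // in C_gt0 C_fin.
apply: (Delta_tilde_transport mulA mul1 mulV act1 actM mact lam_left mleft minv
  act_trans lam_modular lam_sf _ (measurable_indic mC) C_gt0 C_fin M_sf M_inv mB).
by move=> s; rewrite indicE.
Qed.
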